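(* Let $\mathbb{T}$ be a time scale, $\alpha\in]0,1]$, $t\in\mathbb{T}_\kappa^\kappa$, $\lambda\in\mathbb{R}$, and let $f,g:\mathbb{T}\to\mathbb{R}$ be symmetric fractional differentiable of order $\alpha$ at $t$. Then: (i) $f+g$ is symmetric fractional differentiable of order $\alpha$ at $t$ with $(f+g)^{\diamondsuit^\alpha}(t)=f^{\diamondsuit^\alpha}(t)+g^{\diamondsuit^\alpha}(t)$; (ii) $\lambda f$ is symmetric fractional differentiable of order $\alpha$ at $t$ with $(\lambda f)^{\diamondsuit^\alpha}(t)=\lambda f^{\diamondsuit^\alpha}(t)$; (iii) if $f$ and $g$ are continuous at $t$, then $fg$ is symmetric fractional differentiable of order $\alpha$ at $t$ with $(fg)^{\diamondsuit^\alpha}(t)=f^{\diamondsuit^\alpha}(t)g^\sigma(t)+f^\rho(t)g^{\diamondsuit^\alpha}(t)$; (iv) if $f$ is continuous at $t$ and $f^\sigma(t)f^\rho(t)\neq0$, then $1/f$ is symmetric fractional differentiable of order $\alpha$ at $t$ with $\left(\frac1f\right)^{\diamondsuit^\alpha}(t)=-\frac{f^{\diamondsuit^\alpha}(t)}{f^\sigma(t)f^\rho(t)}$; (v) if $f$ and $g$ are continuous at $t$ and $g^\sigma(t)g^\rho(t)\neq0$, then $f/g$ is symmetric fractional differentiable of order $\alpha$ at $t$ with $$\left(\frac fg\right)^{\diamondsuit^\alpha}(t)=\frac{f^{\diamondsuit^\alpha}(t)g^\rho(t)-f^\rho(t)g^{\diamondsuit^\alpha}(t)}{g^\sigma(t)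g^\rho(t)}.$$
   Context: A time scale $\mathbb{T}$ is a nonempty closed subset of $\mathbb{R}$ with the induced topology. $\sigma(t)=\inf\{s\in\mathbb{T}:s>t\}$ ($\inf\emptyset=\sup\mathbb{T}$), $\rho(t)=\sup\{s\in\mathbb{T}:s<t\}$ ($\sup\emptyset=\inf\mathbb{T}$); $f^\sigma=f\circ\sigma$, $f^\rho=f\circ\rho$. $\mathbb{T}^\kappa=\mathbb{T}\setminus\{\sup\mathbb{T}\}$ if $\sup\mathbb{T}$ is finite and left-scattered, else $\mathbb{T}$; $\mathbb{T}_\kappa=\mathbb{T}\setminus\{\inf\mathbb{T}\}$ if $\inf\mathbb{T}$ is finite and right-scattered, else $\mathbb{T}$; $\mathbb{T}_\kappa^\kappa=\mathbb{T}_\kappa\cap\mathbb{T}^\kappa$. Symmetric fractional derivative of order $\alpha$ at $t\in\mathbb{T}_\kappa^\kappa$: the real number $f^{\diamondsuit^\alpha}(t)$ (if it exists) such that for every $\varepsilon>0$ there is a neighborhood $U\subset\mathbb{T}$ of $t$ with $\big|[f^\sigma(t)-f(s)+f(2t-s)-f^\rho(t)]-f^{\diamondsuit^\alpha}(t)[\sigma(t)+2t-2s-\rho(t)]^\alpha\big|\le\varepsilon|\sigma(t)+2t-2s-\rho(t)|^\alpha$ for all $s\in U$ with $2t-s\in U$; $f$ is then symmetric fractional differentiable of order $\alpha$ at $t$. *)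

From HB Require Import structures.
From mathcomp Require Import all_boot all_order all_algebra.
From mathcomp Require Import all_classical all_reals all_analysis.
Set Implicit Arguments. Unset Strict Implicit. Unset Printing Implicit Defensive.
Import Order.TTheory GRing.Theory Num.Theory.
Import numFieldNormedType.Exports.
Local Open Scope classical_set_scope.
Local Open Scope ring_scope.

Section TimeScale.
Variable R : realType.

(* A time scale is a nonempty closed subset T of R (hypotheses in the theorem). *)

Definition fwd_jump (T : set R) (t : R) : R :=
  if pselect ([set s | T s /\ t < s] !=set0)
  then inf [set s | T s /\ t < s] else sup T.

Definition bwd_jump (T : set R) (t : R) : R :=
  if pselect ([set s | T s /\ s < t] !=set0)
  then sup [set s | T s /\ s < t] else inf T.

Definition Tkappa_up (T : set R) : set R :=
  if pselect (has_ubound T /\ bwd_jump T (sup T) < sup T)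
  then T `\ sup T else T.

Definition Tkappa_low (T : set R) : set R :=
  if pselect (has_lbound T /\ inf T < fwd_jump T (inf T))
  then T `\ inf T else T.

Definition Tkk (T : set R) : set R := Tkappa_low T `&` Tkappa_up T.

(* x^alpha for real x, extended to negative x as sign(x) |x|^alpha *)
Definition spow (x a : R) : R := Num.sg x * powR `|x| a.

Definition is_sym_frac_deriv (T : set R) (a : R) (f : R -> R) (t D : R) : Prop :=
  Tkk T t /\
  forall eps : R, 0 < eps ->
    exists U : set R, U `<=` T /\ within T (nbhs t) U /\
      forall s : R, U s -> U (2 * t - s) ->
        `| (f (fwd_jump T t) - f s + f (2 * t - s) - f (bwd_jump T t))
           - D * spow (fwd_jump T t + 2 * t - 2 * s - bwd_jump T t) a |
        <= eps * powR `|fwd_jump T t + 2 * t - 2 * s - bwd_jump T t| a.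

Definition ts_continuous_at (T : set R) (f : R -> R) (t : R) : Prop :=
  f @ within T (nbhs t) --> f t.

End TimeScale.

(* At a point where a jump is nontrivial (sigma t > t or rho t < t), the pairs
   (s, 2t - s) lying near t in T reduce to s = t, so the defining estimate says
   exactly f (sigma t) - f (rho t) = D (sigma t - rho t)^a, and every rule is
   algebra on these identities.  At a dense point the symmetric increment is
   f (2t - s) - f s and the estimate is a little-o statement along the filter of
   such pairs; the error term of f g, 1/f or f/g is then a combination of the
   errors of f and g with convergent coefficients (by continuity), plus the
   weight times a term tending to 0. *)

From HB Require Import structures.
From mathcomp Require Import all_boot all_order all_algebra.
From mathcomp Require Import all_classical all_reals all_analysis.
From mathcomp Require Import ring lra.
Set Implicit Arguments. Unset Strict Implicit. Unset Printing Implicit Defensive.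
Import Order.TTheory GRing.Theory Num.Theory.
Import numFieldNormedType.Exports.
Local Open Scope classical_set_scope.
Local Open Scope ring_scope.

Section LittleO.
Variables (R : realFieldType) (I : Type) (F : set_system I).
Context {FF : Filter F}.

Definition littleo_wrt (w X : I -> R) :=
  forall eps, 0 < eps -> \forall s \near F, `|X s| <= eps * w s.

Lemma littleo_eq w X Y :
  (\forall s \near F, X s = Y s) -> littleo_wrt w X -> littleo_wrt w Y.
Proof.
by move=> XY oX eps e0; apply: filterS2 XY (oX _ e0) => s <-.
Qed.

Lemma littleoD w X Y :
  littleo_wrt w X -> littleo_wrt w Y -> littleo_wrt w (X \+ Y).
Proof.
move=> oX oY eps e0; have e2 : 0 < eps / 2 by rewrite divr_gt0.
apply: filterS2 (oX _ e2) (oY _ e2) => s hX hY /=.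
by rewrite (le_trans (ler_normD _ _)) //; lra.
Qed.

Lemma littleoMr w X B (b : R) :
  littleo_wrt w X -> B @ F --> b -> littleo_wrt w (X \* B).
Proof.
move=> oX Bb eps e0; have M0 : 0 < `|b| + 1 by rewrite ltr_wpDl.
have epsM : eps / (`|b| + 1) * (`|b| + 1) = eps by rewrite divfK ?gt_eqF.
have Bbnd : \forall s \near F, `|B s| <= `|b| + 1.
  by apply: (cvgr_norm_le b Bb); rewrite ltrDl.
apply: filterS2 (oX _ (divr_gt0 e0 M0)) Bbnd.
move=> s hX hB /=; rewrite normrM.
by rewrite (le_trans (ler_pM _ _ hX hB)) // mulrAC epsM.
Qed.

Lemma littleo_cvg0 w p Z :
  (forall s, `|p s| <= w s) -> Z @ F --> 0 -> littleo_wrt w (p \* Z).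
Proof.
move=> pw /cvgr0Pnorm_le Z0 eps e0; apply: filterS (Z0 _ e0) => s hZ /=.
by rewrite normrM mulrC (le_trans (ler_pM _ _ hZ (pw s))).
Qed.

End LittleO.

Lemma Tkk_sub (R : realType) (T : set R) : Tkk T `<=` T.
Proof. by move=> t []; rewrite /Tkappa_low; case: pselect => // _ []. Qed.

Lemma norm_spow_le (R : realType) (x a : R) : `|spow x a| <= powR `|x| a.
Proof.
rewrite /spow normrM normr_sg ger0_norm ?powR_ge0 //.
by case: (x != 0); rewrite /= ?mul1r ?mul0r ?powR_ge0.
Qed.

Lemma norm_le_scale_eq0 (R : realFieldType) (x c : R) :
  (forall eps, 0 < eps -> `|x| <= eps * c) -> x = 0.
Proof.
move=> small; have c0 : 0 <= c by rewrite -[c]mul1r (le_trans _ (small 1 ltr01)).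
apply/normr0_eq0/le_anti; rewrite normr_ge0 andbT.
apply/ler_addgt0Pr => e e0; rewrite add0r.
have c1 : 0 < c + 1 by rewrite ltr_wpDl.
apply: (le_trans (small _ (divr_gt0 e0 c1))).
by rewrite mulrAC ler_pdivrMr // ler_pM2l // lerDl.
Qed.

Section JumpOperators.
Variables (R : realType) (T : set R) (t : R).
Hypothesis Tt : T t.

Lemma fwd_jump_ge : t <= fwd_jump T t.
Proof.
rewrite /fwd_jump; case: pselect => [ne|noright].
  by apply: lb_le_inf => // x [_ /ltW].
apply: ub_le_sup Tt; exists t => x Tx; rewrite leNgt; apply/negP => tx.
by apply: noright; exists x.
Qed.

Lemma bwd_jump_le : bwd_jump T t <= t.
Proof.
rewrite /bwd_jump; case: pselect => [ne|noleft].
  by apply: ge_sup => // x [_ /ltW].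
apply: ge_inf Tt; exists t => x Tx; rewrite leNgt; apply/negP => xt.
by apply: noleft; exists x.
Qed.

End JumpOperators.

Lemma fwd_jump_le (R : realType) (T : set R) (t s : R) :
  T s -> t < s -> fwd_jump T t <= s.
Proof.
move=> Ts ts; rewrite /fwd_jump; case: pselect => [?|none].
  by apply: (ge_inf _ (conj Ts ts)); exists t => x [_ /ltW].
by exfalso; apply: none; exists s.
Qed.

Lemma bwd_jump_ge (R : realType) (T : set R) (t s : R) :
  T s -> s < t -> s <= bwd_jump T t.
Proof.
move=> Ts st; rewrite /bwd_jump; case: pselect => [?|none].
  by apply: (ub_le_sup _ (conj Ts st)); exists t => x [_ /ltW].
by exfalso; apply: none; exists s.
Qed.

Section SymmetricFractionalDerivative.
Variables (R : realType) (T : set R) (a t : R).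

Local Notation sigma := (fwd_jump T t).
Local Notation rho := (bwd_jump T t).

Definition sym_filter : set_system R :=
  filter_from (within T (nbhs t)) (fun U => [set s | U s /\ U (2 * t - s)]).

#[global] Instance sym_filter_filter : Filter sym_filter.
Proof.
apply: filter_from_filter; first by exists setT; apply: filterT.
move=> U V WU WV; exists (U `&` V); first exact: filterI.
by move=> s [[? ?] [? ?]].
Qed.

Definition sym_incr (h : R -> R) (s : R) := h sigma - h s + h (2 * t - s) - h rho.
Definition sym_gap (s : R) := sigma + 2 * t - 2 * s - rho.
Definition sym_weight (s : R) := powR `|sym_gap s| a.
Definition sym_err (h : R -> R) (D s : R) := sym_incr h s - D * spow (sym_gap s) a.

Lemma sym_frac_derivP h D : is_sym_frac_deriv T a h t D <->
  Tkk T t /\ littleo_wrt sym_filter sym_weight (sym_err h D).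
Proof.
split=> -[tk small]; split=> // eps e0.
- have [U [_ [WU hU]]] := small eps e0.
  by exists U => // s [Us U2s]; apply: hU.
- have [U WU hU] := small eps e0.
  exists (U `&` T); split; first exact: subIsetr.
  split; first by apply: filterI => //; apply: withinT.
  by move=> s [Us _] [U2s _]; apply: (hU s).
Qed.

Lemma sym_filter_cvg h : ts_continuous_at T h t -> h @ sym_filter --> h t.
Proof. by move=> ht S /ht WS; exists (h @^-1` S) => // s []. Qed.

Lemma sym_filter_cvg_reflect h :
  ts_continuous_at T h t -> (fun s => h (2 * t - s)) @ sym_filter --> h t.
Proof. by move=> ht S /ht WS; exists (h @^-1` S) => // s []. Qed.

Lemma sym_filter_at P : T t -> sym_filter P -> P t.
Proof.
move=> Tt [U WU UP]; have Ut : U t by apply: (nbhs_singleton WU).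
by apply: UP; rewrite /= (_ : 2 * t - t = t) //; ring.
Qed.

Lemma within_le_of_right_scattered : t < sigma -> within T (nbhs t) [set s | s <= t].
Proof.
move=> tsig; apply/nbhs_ballP; exists (sigma - t) => /=; first by rewrite subr_gt0.
move=> s; rewrite -ball_normE /= => dist_ts Ts; rewrite leNgt; apply/negP => ts.
have := fwd_jump_le Ts ts; rewrite ltr0_norm ?subr_lt0 // in dist_ts; lra.
Qed.

Lemma within_ge_of_left_scattered : rho < t -> within T (nbhs t) [set s | t <= s].
Proof.
move=> rhot; apply/nbhs_ballP; exists (t - rho) => /=; first by rewrite subr_gt0.
move=> s; rewrite -ball_normE /= => dist_ts Ts; rewrite leNgt; apply/negP => st.
have := bwd_jump_ge Ts st; rewrite gtr0_norm ?subr_gt0 // in dist_ts; lra.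
Qed.

Lemma sym_filter_scattered : T t -> ~ (sigma = t /\ rho = t) -> sym_filter [set t].
Proof.
move=> Tt nondense; have [tsig|sigt] := ltP t sigma.
  exists [set s | s <= t]; first exact: within_le_of_right_scattered.
  by move=> s [/= st ts]; apply/eqP; rewrite eq_le st; lra.
have [rhot|trho] := ltP rho t.
  exists [set s | t <= s]; first exact: within_ge_of_left_scattered.
  by move=> s [/= ts st]; apply/eqP; rewrite eq_le ts andbT; lra.
by case: nondense; split; apply/le_anti; rewrite ?sigt ?trho ?fwd_jump_ge ?bwd_jump_le.
Qed.

Lemma sym_err_at h D : sym_err h D t = h sigma - h rho - D * spow (sigma - rho) a.
Proof.
rewrite /sym_err /sym_incr /sym_gap (_ : 2 * t - t = t); last by ring.
by congr (_ - _ * spow _ a); ring.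
Qed.

Lemma sym_frac_deriv_jump h D :
  is_sym_frac_deriv T a h t D -> h sigma - h rho = D * spow (sigma - rho) a.
Proof.
move=> /sym_frac_derivP[tk small]; apply/eqP; rewrite -subr_eq0 -sym_err_at.
apply/eqP/norm_le_scale_eq0 => eps e0.
exact: sym_filter_at (Tkk_sub tk) (small eps e0).
Qed.

Lemma sym_frac_deriv_scattered h D : Tkk T t -> ~ (sigma = t /\ rho = t) ->
  h sigma - h rho = D * spow (sigma - rho) a -> is_sym_frac_deriv T a h t D.
Proof.
move=> tk nondense jump; apply/sym_frac_derivP; split => // eps e0.
apply: filterS (sym_filter_scattered (Tkk_sub tk) nondense) => s /= ->.
by rewrite sym_err_at jump subrr normr0 mulr_ge0 ?powR_ge0 ?ltW.
Qed.

Lemma sym_frac_derivD f g Df Dg :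
  is_sym_frac_deriv T a f t Df -> is_sym_frac_deriv T a g t Dg ->
  is_sym_frac_deriv T a (fun x => f x + g x) t (Df + Dg).
Proof.
move=> /sym_frac_derivP[tk ef] /sym_frac_derivP[_ eg].
apply/sym_frac_derivP; split => //; apply: littleo_eq (littleoD ef eg).
by apply: filterE => s /=; rewrite /sym_err /sym_incr; ring.
Qed.

Lemma sym_frac_derivZ lam f Df : is_sym_frac_deriv T a f t Df ->
  is_sym_frac_deriv T a (fun x => lam * f x) t (lam * Df).
Proof.
move=> /sym_frac_derivP[tk ef]; apply/sym_frac_derivP; split => //.
apply: littleo_eq (littleoMr ef (cvg_cst lam)).
by apply: filterE => s /=; rewrite /sym_err /sym_incr; ring.
Qed.

(* Continuity is only needed at a dense point: at a scattered one the
   symmetric filter is the principal filter of [t]. *)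
Lemma sym_frac_derivM f g Df Dg :
  is_sym_frac_deriv T a f t Df -> is_sym_frac_deriv T a g t Dg ->
  (sigma = t /\ rho = t -> ts_continuous_at T f t /\ ts_continuous_at T g t) ->
  is_sym_frac_deriv T a (fun x => f x * g x) t (Df * g sigma + f rho * Dg).
Proof.
move=> hf hg cont; have tk : Tkk T t := hf.1.
have [dense|nondense] := pselect (sigma = t /\ rho = t); last first.
  apply: sym_frac_deriv_scattered => //.
  have -> : (Df * g sigma + f rho * Dg) * spow (sigma - rho) a =
      Df * spow (sigma - rho) a * g sigma + f rho * (Dg * spow (sigma - rho) a).
    by ring.
  by rewrite -(sym_frac_deriv_jump hf) -(sym_frac_deriv_jump hg); ring.
have [cf cg] := cont dense; case: dense => sig_t rho_t.
move: hf hg => /sym_frac_derivP[_ ef] /sym_frac_derivP[_ eg].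
apply/sym_frac_derivP; split => //; rewrite sig_t rho_t.
have Z0 : (fun s => Df * (g s - g t) + Dg * (f (2 * t - s) - f t)) @ sym_filter --> 0.
  suff : (fun s => Df * (g s - g t) + Dg * (f (2 * t - s) - f t)) @ sym_filter
      --> Df * (g t - g t) + Dg * (f t - f t) by rewrite !subrr !mulr0 addr0.
  apply: cvgD; apply: cvgM (cvg_cst _) _; apply: cvgB _ (cvg_cst _).
    exact: sym_filter_cvg.
  exact: sym_filter_cvg_reflect.
apply: littleo_eq (littleoD (littleoD (littleoMr ef (sym_filter_cvg cg))
  (littleoMr eg (sym_filter_cvg_reflect cf)))
  (littleo_cvg0 (fun s => norm_spow_le (sym_gap s) a) Z0)).
by apply: filterE => s /=; rewrite /sym_err /sym_incr sig_t rho_t; ring.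
Qed.

Lemma sym_frac_derivV f Df :
  is_sym_frac_deriv T a f t Df -> ts_continuous_at T f t -> f sigma * f rho != 0 ->
  is_sym_frac_deriv T a (fun x => (f x)^-1) t (- (Df / (f sigma * f rho))).
Proof.
move=> hf cf; rewrite mulf_eq0 negb_or => /andP[fsig0 frho0].
have tk : Tkk T t := hf.1.
have [[sig_t rho_t]|nondense] := pselect (sigma = t /\ rho = t); last first.
  apply: sym_frac_deriv_scattered => //.
  rewrite mulNr mulrAC -(sym_frac_deriv_jump hf); field.
  by rewrite fsig0 frho0.
move: hf => /sym_frac_derivP[_ ef]; apply/sym_frac_derivP; split => //.
rewrite sig_t rho_t in fsig0 *.
have ft2 : f t * f t != 0 by rewrite mulf_neq0.
have fsym : (fun s => f s * f (2 * t - s)) @ sym_filter --> f t * f t.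
  exact: cvgM (sym_filter_cvg cf) (sym_filter_cvg_reflect cf).
have fsym_inv : (fun s => - (f s * f (2 * t - s))^-1) @ sym_filter --> - (f t * f t)^-1.
  exact: cvgN (cvgV ft2 fsym).
have Z0 : (fun s => Df * ((f t * f t)^-1 - (f s * f (2 * t - s))^-1)) @ sym_filter --> 0.
  suff : (fun s => Df * ((f t * f t)^-1 - (f s * f (2 * t - s))^-1)) @ sym_filter
      --> Df * ((f t * f t)^-1 - (f t * f t)^-1) by rewrite subrr mulr0.
  by apply: cvgM; [exact: cvg_cst | apply: cvgB; [exact: cvg_cst | exact: cvgV]].
apply: littleo_eq (littleoD (littleoMr ef fsym_inv)
  (littleo_cvg0 (fun s => norm_spow_le (sym_gap s) a) Z0)).
have fs_near : \forall s \near sym_filter, f s != 0.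
  exact: cvgr_neq0 _ (sym_filter_cvg cf) fsig0.
have fs'_near : \forall s \near sym_filter, f (2 * t - s) != 0.
  exact: cvgr_neq0 _ (sym_filter_cvg_reflect cf) fsig0.
apply: filterS2 fs_near fs'_near => s fs0 fs'0 /=.
by rewrite /sym_err /sym_incr sig_t rho_t; field; rewrite fs0 fs'0 fsig0.
Qed.

Lemma sym_frac_deriv_div f g Df Dg :
  is_sym_frac_deriv T a f t Df -> is_sym_frac_deriv T a g t Dg ->
  ts_continuous_at T f t -> ts_continuous_at T g t -> g sigma * g rho != 0 ->
  is_sym_frac_deriv T a (fun x => f x / g x) t
    ((Df * g rho - f rho * Dg) / (g sigma * g rho)).
Proof.
move=> hf hg cf cg g0; have hginv := sym_frac_derivV hg cg g0.
move: g0; rewrite mulf_eq0 negb_or => /andP[gsig0 grho0].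
have -> : (Df * g rho - f rho * Dg) / (g sigma * g rho) =
    Df * (g sigma)^-1 + f rho * - (Dg / (g sigma * g rho)).
  by field; rewrite gsig0 grho0.
apply: sym_frac_derivM => // -[sig_t _]; split => //.
by apply: cvgV => //; rewrite -sig_t.
Qed.

End SymmetricFractionalDerivative.

Theorem theorem3p26 (R : realType) (T : set R) (hTne : T !=set0) (hTcl : closed T)
  (a : R) (ha0 : 0 < a) (ha1 : a <= 1) (t : R) (ht : Tkk T t) (lam : R)
  (f g : R -> R) (Df Dg : R)
  (hf : is_sym_frac_deriv T a f t Df) (hg : is_sym_frac_deriv T a g t Dg) :
  [/\ is_sym_frac_deriv T a (fun x => f x + g x) t (Df + Dg),
      is_sym_frac_deriv T a (fun x => lam * f x) t (lam * Df),
      (ts_continuous_at T f t -> ts_continuous_at T g t ->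
        is_sym_frac_deriv T a (fun x => f x * g x) t
          (Df * g (fwd_jump T t) + f (bwd_jump T t) * Dg)),
      (ts_continuous_at T f t -> f (fwd_jump T t) * f (bwd_jump T t) != 0 ->
        is_sym_frac_deriv T a (fun x => (f x)^-1) t
          (- (Df / (f (fwd_jump T t) * f (bwd_jump T t)))))
    & (ts_continuous_at T f t -> ts_continuous_at T g t ->
        g (fwd_jump T t) * g (bwd_jump T t) != 0 ->
        is_sym_frac_deriv T a (fun x => f x / g x) t
          ((Df * g (bwd_jump T t) - f (bwd_jump T t) * Dg)
             / (g (fwd_jump T t) * g (bwd_jump T t))))].
Proof.
split.
- exact: sym_frac_derivD.
- exact: sym_frac_derivZ.
- by move=> cf cg; apply: sym_frac_derivM.
- exact: sym_frac_derivV.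
- exact: sym_frac_deriv_div.
Qed.
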